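(* Let $n\ge1$, let $G^\star=([n],E^\star)$ be a directed graph (directed cycles allowed), and let $S_1=\operatorname{argmin}_{(\mathcal P,\pi)\in\mathcal S}|E^{(1)}_{(\mathcal P,\pi)}|$. Then (i) the partially ordered partition associated with $G^\star$ belongs to $S_1$, and (ii) for every $(\mathcal P,\pi)\in S_1$, $E^{(1)}_{(\mathcal P,\pi)}$ equals the set of ordered pairs $(a,b)\in[n]^2$ such that $a$ and $b$ are $p$-adjacent in $G^\star$.
   Context: $[n]=\{1,\dots,n\}$. The observed distribution is Markov and faithful to $G^\star$; for distinct $a,b$ and $Z\subseteq[n]\setminus\{a,b\}$, $a\perp\!\!\!\perp b\mid Z$ means $a$ and $b$ are $d$-separated given $Z$ in $G^\star$, and $a\not\perp\!\!\!\perp b\mid Z$ is its negation. In a directed graph, $a$ is an ancestor of $b$ if $a=b$ or there is a directed path from $a$ to $b$. Distinct vertices $a,b$ are $p$-adjacent in a directed graph $G$ if there is an edge between them (in either direction), or $a$ and $b$ have a common child in $G$ which is an ancestor of $a$ or of $b$. $\mathcal S$ is the set of pairs $(\mathcal P,\pi)$ with $\mathcal P$ a partition of $[n]$ and $\pi$ a partial order on $\mathcal P$; $C_1\le_\pi C_2$ iff $(C_1,C_2)\in\pi$; $C_{i,\mathcal P}$ is the block containing $i$; $C\le_\pi\max\{C_1,\dots,C_t\}$ means $C\le_\pi C_i$ for some $i$. The strongly connected components of a directed graph $G$ are the classes of $i\sim j$ iff $i=j$ or there are directed paths $i\to j$ and $j\to i$; on them $C_1\le_G C_2$ iff $C_1=C_2$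 or there is a directed path from a vertex of $C_1$ to a vertex of $C_2$. The partially ordered partition associated with $G$ is (its set of strongly connected components, $\le_G$). For $(\mathcal P,\pi)\in\mathcal S$, $E^{(1)}_{(\mathcal P,\pi)}=\{(a,b)\in[n]^2: a\ne b,\ a\not\perp\!\!\!\perp b\mid\bigcup\{C\in\mathcal P: C\le_\pi\max\{C_{a,\mathcal P},C_{b,\mathcal P}\}\}\setminus\{a,b\}\}$. *)

From Stdlib Require Import ClassicalDescription.
From mathcomp Require Import all_boot.
Set Implicit Arguments. Unset Strict Implicit. Unset Printing Implicit Defensive.

(* A directed graph on [n] = 'I_n is an edge relation e : rel 'I_n
   (e a b  means  a -> b).  Ancestor: a is an ancestor of b iff connect e a b
   (reflexive-transitive closure, so a is an ancestor of itself). *)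

Definition pbool (P : Prop) : bool :=
  if excluded_middle_informative P then true else false.

Section Defs.
Variable n : nat.
Implicit Types (e : rel 'I_n) (Z : {set 'I_n}) (a b : 'I_n).

Definition ancestor e a b : bool := connect e a b.

(* d-connection (negation of d-separation) in a possibly cyclic directed graph:
   there is a path a = w_0, w_1, ..., w_k = b of pairwise distinct vertices,
   step i being the edge w_i -> w_{i+1} (ds_i = true) or w_{i+1} -> w_i
   (ds_i = false), such that every intermediate vertex that is a collider
   (both adjacent edges point into it) is an ancestor of some vertex of Z,
   and every intermediate non-collider is not in Z. *)
Definition dconnected e Z a b : Prop :=
  exists (t : seq 'I_n) (ds : seq bool),
    let w := a :: t in
    [/\ last a t = b, uniq w, size ds = size t,
        (forall i, i < size t ->
           if nth false ds i then e (nth a w i) (nth a w i.+1)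
           else e (nth a w i.+1) (nth a w i)) &
        (forall i, 0 < i < size t ->
           let v := nth a w i in
           if nth false ds i.-1 && ~~ nth false ds i
           then [exists z in Z, ancestor e v z]
           else v \notin Z)].

Definition dseparated e Z a b : Prop := ~ dconnected e Z a b.

(* (P, pi) in S: P a partition of [n], pi a partial order on P, given as a set
   of pairs (C1,C2) meaning C1 <=_pi C2. *)
Definition is_pop (P : {set {set 'I_n}}) (pi : {set {set 'I_n} * {set 'I_n}}) : Prop :=
  [/\ partition P [set: 'I_n],
      pi \subset setX P P,
      (forall C, C \in P -> (C, C) \in pi),
      (forall C1 C2, (C1, C2) \in pi -> (C2, C1) \in pi -> C1 = C2) &
      (forall C1 C2 C3, (C1, C2) \in pi -> (C2, C3) \in pi -> (C1, C3) \in pi)].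

(* the conditioning set  U{C in P : C <=_pi max{C_a, C_b}} \ {a,b} *)
Definition condset (P : {set {set 'I_n}}) (pi : {set {set 'I_n} * {set 'I_n}}) a b
  : {set 'I_n} :=
  ((\bigcup_(C in P | ((C, pblock P a) \in pi) || ((C, pblock P b) \in pi)) C)
     :\ a) :\ b.

Definition E1 e (P : {set {set 'I_n}}) (pi : {set {set 'I_n} * {set 'I_n}})
  : {set 'I_n * 'I_n} :=
  [set ab | (ab.1 != ab.2) && pbool (~ dseparated e (condset P pi ab.1 ab.2) ab.1 ab.2)].

Definition in_S1 e P pi : Prop :=
  is_pop P pi /\
  forall P' pi', is_pop P' pi' -> #|E1 e P pi| <= #|E1 e P' pi'|.

Definition scc_partition e : {set {set 'I_n}} :=
  [set [set j | connect e i j && connect e j i] | i : 'I_n].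

Definition scc_order e : {set {set 'I_n} * {set 'I_n}} :=
  [set CC in setX (scc_partition e) (scc_partition e) |
     (CC.1 == CC.2) || [exists x in CC.1, exists y in CC.2, connect e x y]].

Definition p_adjacent e a b : bool :=
  (a != b) &&
  [|| e a b, e b a |
      [exists c, [&& e a c, e b c & ancestor e c a || ancestor e c b]]].

Definition p_adjacent_pairs e : {set 'I_n * 'I_n} :=
  [set ab | p_adjacent e ab.1 ab.2].

End Defs.

From mathcomp Require Import all_boot.
From Stdlib Require Import Classical ClassicalDescription.
Set Implicit Arguments. Unset Strict Implicit. Unset Printing Implicit Defensive.

(* A p-adjacent pair (a, b) is d-connected given any set Z avoiding a and b:
   through the edge between them, through the collider a -> c <- b when c has
   a descendant in Z, and otherwise through a directed path from a or b via c,
   which stays among the descendants of c and so avoids Z.  Hence every E1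
   contains the p-adjacent pairs.
   For the strongly connected components, the conditioning set of (a, b) is the
   set of ancestors of a or b other than a and b.  Along a path d-connecting a
   and b given that set, every vertex is an ancestor of a or b (ancestry passes
   from the head of each edge to its tail, and holds at a, b and the colliders),
   so every inner vertex is conditioned on and must be a collider.  Two adjacent
   vertices cannot both be colliders, so the path is a single edge or
   a -> c <- b with c an ancestor of a or b.  Thus this ordered partition attains
   the least possible E1, and every minimiser has the same E1. *)

Lemma oriented_walk_ind (k : nat) (ds : nat -> bool) (A : pred nat) :
  A 0 -> A k ->
  (forall i, 0 < i < k -> ds i.-1 -> ~~ ds i -> A i) ->
  (forall i, i < k -> if ds i then A i.+1 -> A i else A i -> A i.+1) ->
  forall i, i <= k -> A i.
Proof.
move=> A0 Ak Acol Astep.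
have fwd m i : k - i <= m -> i < k -> ds i -> A i.+1.
  elim: m i => [|m IHm] i; first by rewrite leqn0 subn_eq0 leqNgt => /negbTE->.
  move=> le_m; rewrite leq_eqVlt => /predU1P[-> //|lt_i1k] ds_i.
  move: (Astep _ lt_i1k); case: ifP => [ds_i1 step|/negbT nds_i1 _].
    by apply/step/(IHm i.+1) => //; rewrite subnS -subn1 leq_subLR add1n.
  by apply: Acol; rewrite ?lt_i1k.
have bwd : forall j, j < k -> ~~ ds j -> A j.
  elim=> [//|j IHj] lt_j1k nds_j1; have lt_jk := ltnW lt_j1k.
  move: (Astep _ lt_jk); case: ifP => [ds_j _|/negbT nds_j step].
    by apply: Acol; rewrite ?lt_j1k.
  exact/step/IHj.
case=> [//|i]; rewrite leq_eqVlt => /predU1P[-> //|lt_i1k].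
move: (Astep _ lt_i1k); case: ifP => [ds_i1 step|/negbT nds_i1 _]; last exact: bwd.
exact/step/(fwd _ _ (leqnn _)).
Qed.

Section DSeparation.
Variable n : nat.
Variable e : rel 'I_n.
Implicit Types (Z : {set 'I_n}) (a b c : 'I_n).

Lemma dconnected_oriented_path Z a t (d : bool) :
  uniq (a :: t) -> {in a :: t, forall v, v \notin Z} ->
  path (fun x y => if d then e x y else e y x) a t -> dconnected e Z a (last a t).
Proof.
move=> uniq_t notZ /(pathP a) edges; exists t, (nseq (size t) d).
split=> // [|i lt_it|i /andP[_ lt_it]]; first by rewrite size_nseq.
  by rewrite nth_nseq lt_it; exact: edges.
rewrite !nth_nseq lt_it (leq_ltn_trans (leq_pred i) lt_it) andbN.
by apply: notZ; rewrite mem_nth // ltnW.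
Qed.

Lemma dconnected_path Z a p :
  path e a p -> {in a :: p, forall v, v \notin Z} -> dconnected e Z a (last a p).
Proof.
case/shortenP=> p' e_p' uniq_p' sub_p' notZ.
apply: (@dconnected_oriented_path Z a p' true) => // v.
by rewrite inE => /predU1P[->|/sub_p' v_p]; apply: notZ; rewrite inE ?v_p ?orbT ?eqxx.
Qed.

Lemma dconnected_rev_path Z b p :
  path e b p -> {in b :: p, forall v, v \notin Z} -> dconnected e Z (last b p) b.
Proof.
case/shortenP=> p' e_p' uniq_p' sub_p' notZ.
have rev_p' : rev (b :: p') = last b p' :: rev (belast b p') by rewrite lastI rev_rcons.
have last_rev_p' : last (last b p') (rev (belast b p')) = b.
  by rewrite -[last _ _](last_cons b) -rev_p' rev_cons last_rcons.
rewrite -[in X in dconnected _ _ _ X]last_rev_p'.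
apply: (@dconnected_oriented_path Z _ _ false).
- by rewrite -rev_p' rev_uniq.
- move=> v; rewrite -rev_p' mem_rev inE => /predU1P[->|/sub_p' v_p];
    by apply: notZ; rewrite inE ?v_p ?orbT ?eqxx.
- by rewrite rev_path.
Qed.

Hypothesis e_irr : irreflexive e.

Lemma p_adjacent_dconnected Z a b :
  a \notin Z -> b \notin Z -> p_adjacent e a b -> dconnected e Z a b.
Proof.
move=> aZ bZ /andP[ab /or3P[e_ab|e_ba|/existsP[c /and3P[e_ac e_bc anc_c]]]].
- by apply: (@dconnected_path Z a [:: b]); rewrite /= ?e_ab // => v /predU1P[->|/predU1P[->|]].
- by apply: (@dconnected_rev_path Z b [:: a]); rewrite /= ?e_ba // => v /predU1P[->|/predU1P[->|]].
have [/existsP[z /andP[zZ c_z]]|c_notZ] := boolP [exists z in Z, ancestor e c z].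
  have ac : a != c by apply: contraTneq e_ac => ->; rewrite e_irr.
  have bc : b != c by apply: contraTneq e_bc => ->; rewrite e_irr.
  exists [:: c; b], [:: true; false]; split=> //.
  - by rewrite /= !inE negb_or ac ab eq_sym bc.
  - by case=> [|[]].
  - by case=> [|[|//]] //= _; apply/existsP; exists z; rewrite zZ c_z.
have desc_c p : path e c p -> {in c :: p, forall v, v \notin Z}.
  move=> e_p v /(path_connect e_p) c_v; apply: contra c_notZ => vZ.
  by apply/existsP; exists v; rewrite vZ.
case/orP: anc_c => /connectP[p e_p ->].
  apply: (@dconnected_rev_path Z b (c :: p)); first by rewrite /= e_bc.
  by move=> v /predU1P[->//|]; exact: desc_c.
apply: (@dconnected_path Z a (c :: p)); first by rewrite /= e_ac.
by move=> v /predU1P[->//|]; exact: desc_c.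
Qed.

Definition strict_ancestors a b : {set 'I_n} :=
  [set v | [&& v != a, v != b & ancestor e v a || ancestor e v b]].

Lemma dconnected_strict_ancestors_p_adjacent a b :
  a != b -> dconnected e (strict_ancestors a b) a b -> p_adjacent e a b.
Proof.
move=> ab [t [ds [last_t uniq_t size_ds edge_t col_t]]].
pose w := nth a (a :: t); pose k := size t.
pose anc v := ancestor e v a || ancestor e v b.
have wk : w k = b by rewrite /w -last_t -[last a t]/(last a (a :: t)) -nth_last.
have inner_w i : 0 < i < k -> (w i != a) && (w i != b).
  case/andP=> i_gt0 lt_ik; rewrite -[a]/(w 0) -wk !nth_uniq //= ?ltnS ?(ltnW lt_ik) //.
  by rewrite -lt0n i_gt0 neq_ltn lt_ik.
have anc_connect x y : connect e x y -> anc y -> anc x.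
  by move=> xy /orP[] y_anc; apply/orP; [left|right]; apply: connect_trans xy y_anc.
have anc_w : forall i, i <= k -> anc (w i).
  apply: (@oriented_walk_ind k (nth false ds) (fun i => anc (w i))).
  - by rewrite /anc /ancestor connect0.
  - by rewrite wk /anc /ancestor connect0 orbT.
  - move=> i i_in ds_i1 nds_i; move: (col_t i i_in); rewrite ds_i1 nds_i.
    by case/existsP=> z /andP[]; rewrite inE => /and3P[_ _] /[swap] /anc_connect.
  - move=> i lt_ik; move: (edge_t i lt_ik).
    by case: ifP => _ /connect1 /anc_connect.
have collider i : 0 < i < k -> nth false ds i.-1 && ~~ nth false ds i.
  move=> i_in; apply: contraT => ncol; move: (col_t i i_in) => /=.
  rewrite (negbTE ncol) inE -/(w i); case/andP: (inner_w i i_in) => -> -> /=.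
  by rewrite -/(anc (w i)) (anc_w i) // ltnW //; case/andP: i_in.
rewrite /p_adjacent ab /=.
move: last_t uniq_t edge_t collider anc_w; clear inner_w wk size_ds col_t; rewrite {}/k {}/w.
case: t => [|x [|y [|z t]]] /= last_t uniq_t edge_t collider anc_w.
- by rewrite last_t eqxx in ab.
- by move: (edge_t 0 isT); rewrite last_t; case: (nth false ds 0) => ->; rewrite ?orbT.
- case/andP: (collider 1 isT) => ds0 nds1.
  move: (edge_t 0 isT) (edge_t 1 isT); rewrite ds0 (negbTE nds1) /= last_t => e_ax e_bx.
  by apply/or3P/Or33/existsP; exists x; rewrite e_ax e_bx; exact: (anc_w 1 isT).
- by case/andP: (collider 1 isT) => _ /negbTE; case/andP: (collider 2 isT) => ->.
Qed.
End DSeparation.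

Section StronglyConnectedComponents.
Variable n : nat.
Variable e : rel 'I_n.
Implicit Types (i j a b : 'I_n).

Definition scc_of i : {set 'I_n} := [set j | connect e i j && connect e j i].

Lemma scc_of_refl i : i \in scc_of i.
Proof. by rewrite inE connect0. Qed.

Lemma scc_of_mem i : scc_of i \in scc_partition e.
Proof. exact: imset_f. Qed.

Lemma scc_partitionP C : reflect (exists i, C = scc_of i) (C \in scc_partition e).
Proof. by apply: (iffP imsetP) => [[i _ ->]|[i ->]]; exists i. Qed.

Lemma scc_of_eq i j : connect e i j -> connect e j i -> scc_of i = scc_of j.
Proof.
move=> ij ji; apply/setP => k; rewrite !inE.
by apply/andP/andP => -[ik ki]; split; apply: connect_trans; eassumption.
Qed.

Lemma scc_partition_partition : partition (scc_partition e) [set: 'I_n].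
Proof.
have -> : scc_partition e =
    equivalence_partition [rel i j | j \in scc_of i] [set: 'I_n].
  apply/setP => C; apply/imsetP/imsetP => -[i _ ->]; exists i; rewrite ?inE //;
    by apply/setP => j; rewrite !inE /= inE.
apply: equivalence_partitionP => i j k _ _ _ /=; split; first exact: scc_of_refl.
by rewrite inE => /andP[ij ji]; rewrite (scc_of_eq ij ji).
Qed.

Lemma pblock_scc a : pblock (scc_partition e) a = scc_of a.
Proof.
apply: def_pblock (scc_of_mem a) (scc_of_refl a).
by case/and3P: scc_partition_partition.
Qed.

Lemma scc_order_of i j : ((scc_of i, scc_of j) \in scc_order e) = connect e i j.
Proof.
rewrite inE in_setX !scc_of_mem /=; apply/orP/idP => [[/eqP ij|]|ij].
- by move: (scc_of_refl i); rewrite ij inE => /andP[].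
- case/existsP=> x /andP[]; rewrite inE => /andP[ix _] /existsP[y /andP[]].
  by rewrite inE => /andP[_ yj] xy; rewrite (connect_trans ix) ?(connect_trans xy).
- by right; apply/existsP; exists i; rewrite scc_of_refl; apply/existsP; exists j;
    rewrite scc_of_refl.
Qed.

Lemma scc_orderP C1 C2 : (C1, C2) \in scc_order e ->
  exists i j, [/\ C1 = scc_of i, C2 = scc_of j & connect e i j].
Proof.
move=> /[dup]; rewrite {1}inE in_setX => /andP[/andP[]].
by move=> /scc_partitionP[i ->] /scc_partitionP[j ->] _; rewrite scc_order_of; exists i, j.
Qed.

Lemma is_pop_scc : is_pop (scc_partition e) (scc_order e).
Proof.
split.
- exact: scc_partition_partition.
- by apply/subsetP => CC; rewrite inE => /andP[].
- by move=> C /scc_partitionP[i ->]; rewrite scc_order_of connect0.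
- move=> C1 C2 /scc_orderP[i [j [-> -> ij]]].
  by rewrite scc_order_of; apply: scc_of_eq.
- move=> C1 C2 C3 /scc_orderP[i [j [-> -> ij]]] /scc_orderP[j' [k [jj' -> j'k]]].
  have : j' \in scc_of j by rewrite jj' scc_of_refl.
  rewrite inE => /andP[jj'_conn _].
  by rewrite scc_order_of (connect_trans ij) ?(connect_trans jj'_conn).
Qed.

Lemma condset_scc a b :
  condset (scc_partition e) (scc_order e) a b = strict_ancestors e a b.
Proof.
apply/setP => v; rewrite !inE !pblock_scc andbCA; congr [&& _, _ & _].
apply/bigcupP/idP => [[C /andP[/scc_partitionP[i ->]]]|v_anc].
  rewrite !scc_order_of inE => i_anc /andP[_ vi].
  by case/orP: i_anc => i_anc; apply/orP; [left|right]; apply: connect_trans vi i_anc.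
by exists (scc_of v); rewrite ?scc_of_refl // scc_of_mem !scc_order_of.
Qed.

End StronglyConnectedComponents.

Lemma pboolP (P : Prop) : reflect P (pbool P).
Proof. by rewrite /pbool; case: excluded_middle_informative => p; constructor. Qed.

Section MinimalE1.
Variable n : nat.
Variable e : rel 'I_n.
Hypothesis e_irr : irreflexive e.

Lemma p_adjacent_pairs_subset_E1 P pi : p_adjacent_pairs e \subset E1 e P pi.
Proof.
apply/subsetP => -[a b]; rewrite !inE /= => ab_adj.
rewrite (andP ab_adj).1; apply/pboolP; apply; apply: p_adjacent_dconnected => //.
all: by rewrite !in_setD1 eqxx ?andbF.
Qed.

Lemma E1_scc : E1 e (scc_partition e) (scc_order e) = p_adjacent_pairs e.
Proof.
apply/eqP; rewrite eqEsubset p_adjacent_pairs_subset_E1 andbT.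
apply/subsetP => -[a b]; rewrite !inE /= condset_scc => /andP[ab /pboolP dcon].
exact: dconnected_strict_ancestors_p_adjacent ab (NNPP _ dcon).
Qed.

End MinimalE1.

Theorem proposition3p8 (n : nat) (hn : 0 < n) (e : rel 'I_n)
    (e_irr : irreflexive e) :
  in_S1 e (scc_partition e) (scc_order e) /\
  (forall (P : {set {set 'I_n}}) (pi : {set {set 'I_n} * {set 'I_n}}),
     in_S1 e P pi -> E1 e P pi = p_adjacent_pairs e).
Proof.
have E1_min P pi : #|E1 e (scc_partition e) (scc_order e)| <= #|E1 e P pi|.
  by rewrite E1_scc //; apply/subset_leq_card/p_adjacent_pairs_subset_E1.
split=> [|P pi [_ P_min]]; first by split; [exact: is_pop_scc | move=> P pi _; exact: E1_min].
apply/eqP; rewrite eq_sym eqEcard p_adjacent_pairs_subset_E1 //=.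
by rewrite -(E1_scc e_irr) P_min //; exact: is_pop_scc.
Qed.
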